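(* Let $S$ be a finite set. The comma category $(k\pi_2\downarrow *_S)$ is equivalent to the category $\mathrm{RI}_S$ whose objects are connected ribbon graphs with set of outer flags equal to $S$, and whose morphisms are graph morphisms which are composites of isomorphisms of ribbon graphs and contractions of non-loop edges (with the induced ribbon structure), and whose flag map restricts to the identity on $S$.
   Context: A graph $\Gamma=(F,V,\partial,\imath)$ consists of finite sets $F$ (flags) and $V$ (vertices), $\partial:F\to V$ and an involution $\imath$ of $F$; 2-element orbits of $\imath$ are edges, fixed points are outer flags; $F_v=\partial^{-1}(v)$. Graph morphisms $\phi:\Gamma\to\Gamma'$ are triples $(\phi_V,\phi^F,\imath_\phi)$ with $\phi_V$ a surjection on vertices, $\phi^F:F'\to F$ an injection on flags, $\imath_\phi$ a fixed-point-free involution on flags not in the image (pairing contracted edges or pairs of outer flags), compatible with incidences and preserving non-contracted edges. A cyclic order on a finite set $U$ is a permutation of $U$ with a single orbit (the empty permutation if $U=\emptyset$). A ribbon graph is a graph with a cyclic order $\sigma_v$ on each $F_v$. For a permutation $\rho$ of $U$ and distinct $a,b\in U$, $\rho\langle ab\rangle$ denotes the permutation of $U\setminus\{a,b\}$ given by the first-return map of $\rho\tau_{ab}$: $x\mapsto(\rho\tau_{ab})^m(x)$, $m\ge1$ minimal with result not in $\{a,b\}$. Contracting a non-loop edge $\{s,t\}$ of a ribbon graph gives the merged vertex the cyclic order $(\sigma_{\partial s}\sqcup\sigma_{\partial t})\langle st\rangle$; isomorphisms of ribbon graphs are graph isomorphisms transporting the cyclic orders. Aggregates are graphs with $\imath=\mathrm{id}$;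 $*_S$ is the one-vertex aggregate with flags $S$. $\mathrm{Agg}^{\rm ctd}$: aggregates with morphisms generated by isomorphisms, virtual edge contractions ${}_s\circ_t$ (outer flags $s,t$ at distinct vertices; merge the vertices, delete $s,t$) and virtual loop contractions $\circ_{st}$ ($s,t$ at one vertex; delete them); $\mathrm{Agg}^{\rm forest}$: generated by isomorphisms and virtual edge contractions. $\mathcal O_{\rm cycass}:\mathrm{Agg}^{\rm forest}\to\mathrm{Set}$ assigns to $X$ the set of families of cyclic orders on all $F_v$; isomorphisms transport by conjugation, and ${}_s\circ_t$ gives the merged vertex $(\sigma_{\partial s}\sqcup\sigma_{\partial t})\langle st\rangle$. The comma category $(k\pi_2\downarrow *_S)$ has objects triples $(X,o,\phi)$ with $X$ an aggregate, $o\in\mathcal O_{\rm cycass}(X)$, $\phi:X\to *_S$ in $\mathrm{Agg}^{\rm ctd}$; morphisms $(X,o,\phi)\to(X',o',\phi')$ are $\psi:X\to X'$ in $\mathrm{Agg}^{\rm forest}$ with $\mathcal O_{\rm cycass}(\psi)(o)=o'$ and $\phi'\psi=\phi$. *)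

From HB Require Import structures.
From mathcomp Require Import all_boot.

Set Implicit Arguments.
Unset Strict Implicit.
Unset Printing Implicit Defensive.

(* Categories presented by a type of raw arrows, a predicate selecting  *)
(* the actual morphisms, the equality of morphisms, identities and      *)
(* (diagrammatic) composition:  cmp f g  is  "g after f".               *)
Record pcat := PCat {
  ob : Type;
  arr : ob -> ob -> Type;
  ishom : forall a b, arr a b -> Prop;
  heq : forall a b, arr a b -> arr a b -> Prop;
  idm : forall a, arr a a;
  cmp : forall a b c, arr a b -> arr b c -> arr a c }.
Arguments ob p : clear implicits.
Arguments arr p a b : clear implicits.
Arguments ishom {p a b}.
Arguments heq {p a b}.
Arguments idm p a : clear implicits.
Arguments cmp {p a b c}.

Record functor (C D : pcat) := Functor {
  fo : ob C -> ob D;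
  fm : forall a b, arr C a b -> arr D (fo a) (fo b) }.
Arguments fo {C D}.
Arguments fm {C D} f {a b} : rename.

Definition is_functor C D (F : functor C D) : Prop :=
  [/\ forall a b (f : arr C a b), ishom f -> ishom (fm F f),
      forall a b (f g : arr C a b), ishom f -> ishom g -> heq f g ->
        heq (fm F f) (fm F g),
      forall a, heq (fm F (idm C a)) (idm D (fo F a)) &
      forall a b c (f : arr C a b) (g : arr C b c), ishom f -> ishom g ->
        heq (fm F (cmp f g)) (cmp (fm F f) (fm F g))].

Definition fid C : functor C C := @Functor C C (fun a => a) (fun a b f => f).
Definition fcomp C D E (F : functor C D) (G : functor D E) : functor C E :=
  @Functor C E (fun a => fo G (fo F a)) (fun a b f => fm G (fm F f)).

Definition natiso C D (F G : functor C D) : Prop :=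
  exists (eta : forall a, arr D (fo F a) (fo G a))
         (eti : forall a, arr D (fo G a) (fo F a)),
  [/\ forall a, ishom (eta a) /\ ishom (eti a),
      forall a, heq (cmp (eta a) (eti a)) (idm D (fo F a)) /\
                heq (cmp (eti a) (eta a)) (idm D (fo G a)) &
      forall a b (f : arr C a b), ishom f ->
        heq (cmp (fm F f) (eta b)) (cmp (eta a) (fm G f))].

Definition cat_equiv (C D : pcat) : Prop :=
  exists (F : functor C D) (G : functor D C),
  [/\ is_functor F, is_functor G, natiso (fid C) (fcomp F G) &
      natiso (fcomp G F) (fid D)].

Record graph := Graph {
  gF : finType; gV : finType; gbd : gF -> gV; ginv : gF -> gF }.
Arguments gF g : clear implicits.
Arguments gV g : clear implicits.
Arguments gbd g _ : clear implicits.
Arguments ginv g _ : clear implicits.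

Definition is_graph (G : graph) : Prop := forall a, ginv G (ginv G a) = a.

Definition is_agg (G : graph) : Prop := forall a, ginv G a = a.

(* Graph morphisms G -> H : (phi_V, phi^F, i_phi).  i_phi is only
   meaningful on flags outside the image of phi^F. *)
Record gmor (G H : graph) := GMor {
  mV : gV G -> gV H; mF : gF H -> gF G; mI : gF G -> gF G }.

Definition inimg G H (f : gmor G H) (a : gF G) : bool := [exists b, mF f b == a].

Definition is_gmor G H (f : gmor G H) : Prop :=
  [/\ (forall w, exists v, mV f v = w),
      injective (mF f),
      (forall b, mV f (gbd G (mF f b)) = gbd H b),
      (forall b, mF f (ginv H b) = ginv G (mF f b)) &
      (forall a, ~~ inimg f a ->
         [/\ ~~ inimg f (mI f a), mI f a <> a, mI f (mI f a) = a,
             (ginv G a <> a -> mI f a = ginv G a) &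
             mV f (gbd G a) = mV f (gbd G (mI f a))])].

Definition gid G : gmor G G := @GMor G G (fun v => v) (fun a => a) (fun a => a).

Definition gcomp G1 G2 G3 (f : gmor G1 G2) (g : gmor G2 G3) : gmor G1 G3 :=
  @GMor G1 G3 (fun v => mV g (mV f v)) (fun c => mF f (mF g c))
    (fun a => if [pick b | mF f b == a] is Some b then mF f (mI g b)
              else mI f a).

Definition geq G H (f g : gmor G H) : Prop :=
  [/\ forall v, mV f v = mV g v, forall b, mF f b = mF g b &
      forall a, ~~ inimg f a -> mI f a = mI g a].

Definition is_giso G H (f : gmor G H) : Prop :=
  [/\ is_gmor f, bijective (mV f) & bijective (mF f)].

(* contraction of the pair {s,t}: the flags s,t are deleted and paired by
   i_phi; if merge, the distinct vertices of s and t are merged (edge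
   contraction), otherwise s,t sit at one vertex and no vertices are
   identified (loop contraction). *)
Definition is_pair_contr G H (f : gmor G H) (s t : gF G) (merge : bool) : Prop :=
  [/\ is_gmor f, s != t,
      (forall a, inimg f a = (a != s) && (a != t)),
      mI f s = t &
      (if merge then
         gbd G s != gbd G t /\
         (forall v w, mV f v = mV f w <->
            [\/ v = w, v = gbd G s /\ w = gbd G t | v = gbd G t /\ w = gbd G s])
       else gbd G s = gbd G t /\ injective (mV f))].

(* Cyclic orders on all F_v, packaged as one permutation of F that      *)
(* preserves each F_v and has a single orbit on each F_v.               *)
Definition is_cycord (G : graph) (o : gF G -> gF G) : Prop :=
  [/\ injective o, (forall a, gbd G (o a) = gbd G a) &
      (forall a b, gbd G a = gbd G b -> exists n, iter n o a = b)].

Definition tau (T : eqType) (a b x : T) : T :=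
  if x == a then b else if x == b then a else x.

(* y = rho<ab>(x): first return of rho tau_ab (tau applied first) *)
Definition first_return (T : eqType) (rho : T -> T) (a b x y : T) : Prop :=
  exists m, [/\ (0 < m)%N, iter m (fun z => rho (tau a b z)) x = y,
                y \notin [:: a; b] &
                forall k, (0 < k < m)%N ->
                  iter k (fun z => rho (tau a b z)) x \in [:: a; b]].

Definition iso_transport G H (f : gmor G H) (o : gF G -> gF G) (o' : gF H -> gF H) :=
  forall b, mF f (o' b) = o (mF f b).

Definition contr_transport G H (f : gmor G H) (s t : gF G)
    (o : gF G -> gF G) (o' : gF H -> gF H) :=
  forall b, first_return o s t (mF f b) (mF f (o' b)).

Inductive gclosure (Gen : forall G H : graph, gmor G H -> Prop) :
    forall G H, gmor G H -> Prop :=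
| gcl_gen G H (f : gmor G H) : Gen G H f -> gclosure Gen f
| gcl_step G1 G2 G3 (f : gmor G1 G2) (g : gmor G2 G3) :
    Gen G1 G2 f -> gclosure Gen g -> gclosure Gen (gcomp f g)
| gcl_ext G H (f f' : gmor G H) : gclosure Gen f -> geq f f' -> gclosure Gen f'.

Inductive oclosure
    (Gen : forall G H : graph, gmor G H -> (gF G -> gF G) -> (gF H -> gF H) -> Prop) :
    forall G H, gmor G H -> (gF G -> gF G) -> (gF H -> gF H) -> Prop :=
| ocl_gen G H (f : gmor G H) o o' : Gen G H f o o' -> oclosure Gen f o o'
| ocl_step G1 G2 G3 (f : gmor G1 G2) (g : gmor G2 G3) o1 o2 o3 :
    Gen G1 G2 f o1 o2 -> oclosure Gen g o2 o3 -> oclosure Gen (gcomp f g) o1 o3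
| ocl_ext G H (f f' : gmor G H) o o' :
    oclosure Gen f o o' -> geq f f' -> oclosure Gen f' o o'.

Definition ctd_gen G H (f : gmor G H) : Prop :=
  [/\ is_agg G, is_agg H &
      is_giso f \/ exists s t merge, is_pair_contr f s t merge].

(* Agg^forest generators together with the action of O_cycass *)
Definition forest_gen G H (f : gmor G H) (o : gF G -> gF G) (o' : gF H -> gF H) : Prop :=
  [/\ is_agg G, is_agg H, is_cycord o, is_cycord o' &
      (is_giso f /\ iso_transport f o o') \/
      (exists s t, is_pair_contr f s t true /\ contr_transport f s t o o')].

Definition ribbon_gen G H (f : gmor G H) (o : gF G -> gF G) (o' : gF H -> gF H) : Prop :=
  [/\ is_graph G, is_graph H, is_cycord o, is_cycord o' &
      (is_giso f /\ iso_transport f o o') \/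
      (exists s t, [/\ ginv G s = t, is_pair_contr f s t true &
                       contr_transport f s t o o'])].

Definition star (S : finType) : graph :=
  @Graph S unit (fun _ => tt) (fun a => a).

Record comma_ob (S : finType) := CommaOb {
  cX : graph;
  co : gF cX -> gF cX;
  cphi : gmor cX (star S);
  cX_agg : is_agg cX;
  co_cyc : is_cycord co;
  cphi_ctd : gclosure ctd_gen cphi }.
Arguments co {S} c _.

Definition comma_cat (S : finType) : pcat :=
  @PCat (comma_ob S) (fun a b => gmor (cX a) (cX b))
    (fun a b psi => oclosure forest_gen psi (co a) (co b) /\
                    geq (gcomp psi (cphi b)) (cphi a))
    (fun a b f g => geq f g)
    (fun a => gid (cX a))
    (fun a b c f g => gcomp f g).

Definition adj (G : graph) : rel (gV G) := fun v w =>
  [exists a, [&& ginv G a != a, gbd G a == v & gbd G (ginv G a) == w]].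
Arguments adj G : clear implicits.

Definition connected (G : graph) : Prop :=
  (0 < #|gV G|)%N /\ forall v w, connect (adj G) v w.

Record rdata (S : finType) := RData {
  rE : finType; rV : finType;
  rbd : (S + rE)%type -> rV;
  rinv : (S + rE)%type -> (S + rE)%type;
  rsig : (S + rE)%type -> (S + rE)%type }.
Arguments rbd {S} r _.
Arguments rinv {S} r _.
Arguments rsig {S} r _.

Definition rgraph S (r : rdata S) : graph := @Graph (S + rE r)%type (rV r) (rbd r) (rinv r).

Definition ri_valid S (r : rdata S) : Prop :=
  [/\ is_graph (rgraph r), @is_cycord (rgraph r) (rsig r), connected (rgraph r) &
      (* the outer flags are exactly S *)
      forall x, rinv r x = x <-> exists s, x = inl s].

Definition ri_ob (S : finType) := { r : rdata S | ri_valid r }.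

Definition RI_cat (S : finType) : pcat :=
  @PCat (ri_ob S) (fun a b => gmor (rgraph (sval a)) (rgraph (sval b)))
    (fun a b psi =>
       oclosure ribbon_gen psi (rsig (sval a)) (rsig (sval b)) /\
       forall s : S, mF psi (inl s) = inl s)
    (fun a b f g => geq f g)
    (fun a => gid (rgraph (sval a)))
    (fun a b c f g => gcomp f g).

(* An object (X, o, phi) of the comma category is a ribbon graph in disguise:
   the flags of X outside the image of phi come in pairs (those contracted
   by phi), and declaring these pairs to be edges turns X with its cyclic
   orders into a ribbon graph with outer flags S.  Conversely a ribbon graph
   maps to *_S by contracting all of its edges virtually.  The substantive
   point is that a graph morphism X -> *_S lies in Agg^ctd exactly when the
   pairs it contracts connect all vertices of X: necessity is preserved by
   composition, sufficiency follows by contracting one pair at a time.  A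
   forest morphism over *_S then becomes, after relabelling the involution
   along it, a composite of ribbon isomorphisms and non-loop edge
   contractions, and vice versa. *)

From HB Require Import structures.
From mathcomp Require Import all_boot.

Set Implicit Arguments.
Unset Strict Implicit.
Unset Printing Implicit Defensive.

(** * Graph morphisms *)

Lemma unit_eq (x y : unit) : x = y. Proof. by case: x; case: y. Qed.

Lemma connect_homo (T T' : finType) (e : rel T) (e' : rel T') (h : T -> T') :
  (forall x y, e x y -> connect e' (h x) (h y)) ->
  forall x y, connect e x y -> connect e' (h x) (h y).
Proof.
move=> eh x y /connectP [p pth ->]; elim: p x pth => [|z p IHp] x /=.
  by move=> _; apply: connect0.
by case/andP => exz pth; apply: connect_trans (eh _ _ exz) (IHp _ pth).
Qed.

Lemma inimgP G H (f : gmor G H) a : reflect (exists b, mF f b = a) (inimg f a).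
Proof. by apply: (iffP existsP) => [[b /eqP <-]|[b <-]]; exists b. Qed.

Lemma inimg_mF G H (f : gmor G H) b : inimg f (mF f b).
Proof. by apply/inimgP; exists b. Qed.

Lemma gcomp_mI_in G1 G2 G3 (f : gmor G1 G2) (g : gmor G2 G3) b :
  injective (mF f) -> mI (gcomp f g) (mF f b) = mF f (mI g b).
Proof.
move=> injf /=; case: pickP => [b' /eqP /injf -> //|nb].
by move: (nb b); rewrite eqxx.
Qed.

Lemma gcomp_mI_out G1 G2 G3 (f : gmor G1 G2) (g : gmor G2 G3) a :
  ~~ inimg f a -> mI (gcomp f g) a = mI f a.
Proof.
move=> na /=; case: pickP => [b /eqP eb | //].
by move: na; rewrite -eb inimg_mF.
Qed.

Lemma inimg_gcomp G1 G2 G3 (f : gmor G1 G2) (g : gmor G2 G3) a :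
  injective (mF f) ->
  inimg (gcomp f g) a = inimg f a && [exists b, (mF f b == a) && inimg g b].
Proof.
move=> injf; apply/idP/idP.
  case/inimgP => c <- /=; rewrite inimg_mF /=; apply/existsP; exists (mF g c).
  by rewrite eqxx inimg_mF.
case/andP=> _ /existsP [b /andP [/eqP <- /inimgP [c <-]]].
by apply/inimgP; exists c.
Qed.

Lemma is_gmor_gcomp G1 G2 G3 (f : gmor G1 G2) (g : gmor G2 G3) :
  is_gmor f -> is_gmor g -> is_gmor (gcomp f g).
Proof.
case=> sf injf incf edf nif; case=> sg injg incg edg nig; split.
- by move=> w; have [u <-] := sg w; have [v <-] := sf u; exists v.
- by move=> x y /= /injf /injg.
- by move=> c /=; rewrite incf incg.
- by move=> c /=; rewrite edg edf.
move=> a na; case: (boolP (inimg f a)) => [/inimgP [b eb] | nfa].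
  subst a; have ngb : ~~ inimg g b.
    by apply: contra na => /inimgP [c <-]; apply/inimgP; exists c.
  have [n1 n2 n3 n4 n5] := nig b ngb.
  rewrite !gcomp_mI_in // n3; split => //.
  - by apply: contra n1 => /inimgP [c /= /injf e]; apply/inimgP; exists c.
  - by move/injf.
  - by move=> h; rewrite -edf in h *; rewrite n4 // => e; apply: h; rewrite e.
  - by rewrite /= !incf.
have [n1 n2 n3 n4 n5] := nif a nfa.
rewrite !gcomp_mI_out // n3; split => //.
- by apply: contra n1 => /inimgP [c /= <-]; apply: inimg_mF.
- by rewrite /= n5.
Qed.

Lemma inimg_geq G H (f g : gmor G H) a : geq f g -> inimg f a = inimg g a.
Proof. by case=> _ eF _; apply/idP/idP => /inimgP [b <-]; apply/inimgP; exists b. Qed.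

Lemma geq_sym G H (f g : gmor G H) : geq f g -> geq g f.
Proof.
move=> fg; case: (fg) => eV eF eI; split=> // a na.
by rewrite eI // (inimg_geq a fg).
Qed.

Lemma is_gmor_geq G H (f g : gmor G H) : geq f g -> is_gmor f -> is_gmor g.
Proof.
move=> fg; case: (fg) => eV eF eI [sf injf incf edf nif]; split.
- by move=> w; have [v <-] := sf w; exists v; rewrite eV.
- by move=> x y; rewrite -!eF => /injf.
- by move=> b; rewrite -eV -eF.
- by move=> b; rewrite -!eF.
move=> a; rewrite -(inimg_geq a fg) => na.
have [n1 n2 n3 n4 n5] := nif a na.
rewrite -(eI a na) -(eI _ n1); split => //; first by rewrite -(inimg_geq _ fg).
by rewrite -!eV.
Qed.

Lemma gcompA G1 G2 G3 G4 (f : gmor G1 G2) (g : gmor G2 G3) (h : gmor G3 G4) :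
  injective (mF f) -> injective (mF g) ->
  geq (gcomp f (gcomp g h)) (gcomp (gcomp f g) h).
Proof.
move=> injf injg; have injfg : injective (mF (gcomp f g)) by move=> x y /injf /injg.
apply: geq_sym; split => // a _.
case: (boolP (inimg f a)) => [/inimgP [b <-] | na]; last first.
  rewrite !gcomp_mI_out //.
  by apply: contra na => /inimgP [c /= <-]; apply: inimg_mF.
rewrite [RHS]gcomp_mI_in //.
case: (boolP (inimg g b)) => [/inimgP [c <-] | nb].
  rewrite gcomp_mI_in // (_ : mF f (mF g c) = mF (gcomp f g) c) //.
  by rewrite gcomp_mI_in.
rewrite (gcomp_mI_out (f := gcomp f g)); last first.
  by apply: contra nb => /inimgP [c /= /injf <-]; apply: inimg_mF.
by rewrite gcomp_mI_in // gcomp_mI_out.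
Qed.

Lemma geq_gcompl G1 G2 G3 (f f' : gmor G1 G2) (g : gmor G2 G3) :
  injective (mF f) -> geq f f' -> geq (gcomp f g) (gcomp f' g).
Proof.
move=> injf ff'; case: (ff') => eV eF eI; split.
- by move=> v /=; rewrite eV.
- by move=> c /=; rewrite eF.
have injf' : injective (mF f') by move=> x y; rewrite -!eF => /injf.
move=> a _; case: (boolP (inimg f a)) => [/inimgP [b <-] | na].
  by rewrite gcomp_mI_in // (eF b) gcomp_mI_in // eF.
by rewrite !gcomp_mI_out ?eI // -(inimg_geq a ff').
Qed.

Lemma geq_gid G (f : gmor G G) :
  (forall v, mV f v = v) -> (forall b, mF f b = b) -> geq f (gid G).
Proof. by move=> fV fF; split => // a /negP []; apply/inimgP; exists a. Qed.

(* A bijection on flags leaves nothing outside the image, so the last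
   clause of [is_gmor] is vacuous. *)
Lemma giso_bij G H (f : gmor G H) :
  bijective (mV f) -> bijective (mF f) ->
  (forall b, mV f (gbd G (mF f b)) = gbd H b) ->
  (forall b, mF f (ginv H b) = ginv G (mF f b)) -> is_giso f.
Proof.
move=> bV bF inc ed; split => //; split => //.
- by case: bV => g _ gK w; exists (g w).
- exact: bij_inj.
by case: bF => g gK Kg a /negP []; apply/inimgP; exists (g a).
Qed.

(** * Fibre connectivity *)

Definition contr_adj G H (f : gmor G H) : rel (gV G) := fun v w =>
  [exists a, [&& ~~ inimg f a, gbd G a == v & gbd G (mI f a) == w]].

Definition fibre_connected G H (f : gmor G H) :=
  forall v w, mV f v = mV f w -> connect (contr_adj f) v w.

Lemma iso_or_contr_gmor G H (f : gmor G H) :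
  is_giso f \/ (exists s t merge, is_pair_contr f s t merge) -> is_gmor f.
Proof. by case=> [[]|[s [t [m []]]]]. Qed.

Lemma iso_or_contr_fibre_connected G H (f : gmor G H) :
  is_giso f \/ (exists s t merge, is_pair_contr f s t merge) -> fibre_connected f.
Proof.
case=> [[_ [g gK _] _]|[s [t [m [[_ _ _ _ nif] _ inimgf ms hm]]]]] v w e.
  by rewrite -(gK v) e gK connect0.
have ns : ~~ inimg f s by rewrite inimgf eqxx.
have nt : ~~ inimg f t by rewrite inimgf eqxx andbF.
have [_ _ mt _ _] := nif s ns; rewrite ms in mt.
case: m hm => [[_ /(_ v w) [/(_ e) vw _]]|[_ injV]]; last first.
  by rewrite (injV _ _ e) connect0.
case: vw => [->|[-> ->]|[-> ->]]; first exact: connect0.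
  by apply: connect1; apply/existsP; exists s; rewrite ns ms !eqxx.
by apply: connect1; apply/existsP; exists t; rewrite nt mt !eqxx.
Qed.

Lemma contr_adj_gcomp G1 G2 G3 (f : gmor G1 G2) (g : gmor G2 G3) v w :
  contr_adj f v w -> contr_adj (gcomp f g) v w.
Proof.
case/existsP => a /and3P [na e1 e2]; apply/existsP; exists a.
have na' : ~~ inimg (gcomp f g) a.
  by apply: contra na => /inimgP [c <-]; apply: inimg_mF.
by rewrite na' e1 gcomp_mI_out.
Qed.

Lemma contr_adj_lift G1 G2 G3 (f : gmor G1 G2) (g : gmor G2 G3) x y :
  is_gmor f -> contr_adj g x y ->
  exists v w, [/\ mV f v = x, mV f w = y & contr_adj (gcomp f g) v w].
Proof.
case=> _ injf incf _ _ /existsP [c /and3P [nc /eqP e1 /eqP e2]].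
exists (gbd G1 (mF f c)), (gbd G1 (mF f (mI g c))); rewrite !incf; split => //.
apply/existsP; exists (mF f c); rewrite gcomp_mI_in // !eqxx !andbT.
by apply: contra nc => /inimgP [d /= /injf <-]; apply: inimg_mF.
Qed.

(* A path in the base between the images of [v] and [w] is lifted edge by edge,
   the fibres of [f] being used to join consecutive lifts. *)
Lemma fibre_connected_gcomp G1 G2 G3 (f : gmor G1 G2) (g : gmor G2 G3) :
  is_gmor f -> fibre_connected f -> fibre_connected g ->
  fibre_connected (gcomp f g).
Proof.
move=> gf cf cg v w /cg.
have fibre v1 w1 : mV f v1 = mV f w1 -> connect (contr_adj (gcomp f g)) v1 w1.
  move/cf; apply: connect_sub => x y h; apply: connect1; exact: contr_adj_gcomp.
suff lift x y : connect (contr_adj g) x y -> forall v w,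
    mV f v = x -> mV f w = y -> connect (contr_adj (gcomp f g)) v w.
  by move/lift; apply.
case/connectP=> p pth ly; elim: p x pth ly => [|z p IHp] x /=.
  by move=> _ -> v1 w1 e1 e2; apply: fibre; rewrite e1 e2.
case/andP => /(contr_adj_lift gf) [v' [w' [e1 e2 adj']]] pth ly v1 w1 ex ey.
apply: connect_trans (fibre _ _ (etrans ex (esym e1))) _.
exact: connect_trans (connect1 adj') (IHp _ pth ly _ _ e2 ey).
Qed.

Lemma contr_adj_geq G H (f f' : gmor G H) v w :
  geq f f' -> contr_adj f v w = contr_adj f' v w.
Proof.
move=> ff'; case: (ff') => _ _ eI.
apply/existsP/existsP => -[a /and3P [na e1 e2]]; exists a.
  by rewrite -(inimg_geq a ff') na e1 -eI.
by rewrite (inimg_geq a ff') na e1 eI // (inimg_geq a ff').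
Qed.

Lemma fibre_connected_geq G H (f f' : gmor G H) :
  geq f f' -> fibre_connected f -> fibre_connected f'.
Proof.
move=> ff'; case: (ff') => eV _ _ cf v w; rewrite -!eV => /cf.
by apply: connect_sub => x y h; apply: connect1; rewrite -(contr_adj_geq _ _ ff').
Qed.

Lemma ctd_closure_gmor G H (f : gmor G H) :
  gclosure ctd_gen f -> is_gmor f /\ fibre_connected f.
Proof.
elim=> {G H f}.
- move=> G H f [_ _ h]; split.
    exact: iso_or_contr_gmor.
  exact: iso_or_contr_fibre_connected.
- move=> G1 G2 G3 f g [_ _ h] _ [gg cg]; have gf := iso_or_contr_gmor h.
  split; first exact: is_gmor_gcomp.
  by apply: fibre_connected_gcomp => //; apply: iso_or_contr_fibre_connected.
- move=> G H f f' _ [gf cf] ff'; split.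
    exact: is_gmor_geq gf.
  exact: fibre_connected_geq cf.
Qed.

(** * Morphisms of Agg^ctd to a corolla *)

Definition pairs_complement G H (f : gmor G H) :=
  forall x, ~~ inimg f x ->
    [/\ ~~ inimg f (mI f x), mI f x <> x & mI f (mI f x) = x].

Section ContractPair.
Variables (S : finType) (Y : graph) (psi : gmor Y (star S)) (a : gF Y).
Hypotheses (aggY : is_agg Y) (injpsi : injective (mF psi)).
Hypotheses (pairs_psi : pairs_complement psi) (na : ~~ inimg psi a).

Local Notation b := (mI psi a).

Let nb : ~~ inimg psi b. Proof. by case: (pairs_psi na). Qed.
Let ba : b != a. Proof. by case: (pairs_psi na) => _ /eqP. Qed.
Let bb : mI psi b = a. Proof. by case: (pairs_psi na). Qed.

(* The pair {a, b} is contracted virtually: as an edge contraction when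
   a and b sit at different vertices (then the vertex of b disappears),
   as a loop contraction otherwise. *)
Definition pair_merges := gbd Y a != gbd Y b.

Definition contracted_vert := {v : gV Y | ~~ pair_merges || (v != gbd Y b)}.

Lemma contract_vert_subproof v :
  ~~ pair_merges ||
  ((if pair_merges && (v == gbd Y b) then gbd Y a else v) != gbd Y b).
Proof.
rewrite /pair_merges; case: (eqVneq (gbd Y a) (gbd Y b)) => [//|ne] /=.
by case: ifP => // /negbT.
Qed.

Definition contract_vert v : contracted_vert :=
  @exist _ (fun w => ~~ pair_merges || (w != gbd Y b)) _ (contract_vert_subproof v).

Lemma contract_vertK (w : contracted_vert) : contract_vert (val w) = w.
Proof.
apply: val_inj; case: w => w /=.
by case: pair_merges => //= /negbTE ->.
Qed.

Lemma contract_vert_pair : contract_vert (gbd Y a) = contract_vert (gbd Y b).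
Proof.
apply: val_inj => /=; rewrite eqxx andbT /pair_merges.
by case: (eqVneq (gbd Y a) (gbd Y b)) => [->|_] /=; rewrite ?if_same.
Qed.

Definition contracted_flag := {x : gF Y | (x != a) && (x != b)}.

Definition contracted : graph :=
  @Graph contracted_flag contracted_vert (fun x => contract_vert (gbd Y (val x))) (fun x => x).

Definition contract_mor : gmor Y contracted :=
  @GMor Y contracted contract_vert (fun x : contracted_flag => val x) (tau a b).

Lemma factor_flag_subproof s : (mF psi s != a) && (mF psi s != b).
Proof.
by apply/andP; split; apply/eqP => e; [move: na | move: nb]; rewrite -e inimg_mF.
Qed.

Definition factor_mor : gmor contracted (star S) :=
  @GMor contracted (star S) (fun _ => tt)
    (fun s => @exist _ (fun x => (x != a) && (x != b)) _ (factor_flag_subproof s))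
    (fun x => insubd x (mI psi (val x))).

Lemma inimg_contract_mor c : inimg contract_mor c = (c != a) && (c != b).
Proof.
apply/inimgP/idP => [[x <-]|h]; first exact: (valP x).
by exists (Sub c h : contracted_flag).
Qed.

Lemma inimg_factor_mor x : inimg factor_mor x = inimg psi (val x).
Proof.
apply/inimgP/inimgP => [[s <-]|[s e]]; first by exists s.
by exists s; apply: val_inj.
Qed.

Lemma val_mI_factor_mor x :
  ~~ inimg factor_mor x -> val (mI factor_mor x) = mI psi (val x).
Proof.
rewrite inimg_factor_mor => nx; rewrite /= val_insubd.
case: x nx => x /= /andP [xa xb] nx; have [_ _ xx] := pairs_psi nx.
rewrite ifT //; apply/andP; split.
  by apply: contra_neq xb => e; rewrite -xx e.
by apply: contra_neq xa => e; rewrite -xx e bb.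
Qed.

Lemma contract_mor_pair_contr : is_pair_contr contract_mor a b pair_merges.
Proof.
have tau_a : tau a b a = b by rewrite /tau eqxx.
have tau_b : tau a b b = a by rewrite /tau eqxx (negbTE ba).
have ab_cases c : ~~ inimg contract_mor c -> c = a \/ c = b.
  by rewrite inimg_contract_mor negb_and !negbK => /orP [/eqP|/eqP]; [left|right].
split.
- split => //; first by move=> w; exists (val w); apply: contract_vertK.
  + exact: val_inj.
  move=> c /ab_cases [->|->] /=; rewrite ?(tau_a, tau_b) aggY; split => //;
    rewrite ?inimg_contract_mor ?eqxx ?andbF ?contract_vert_pair //;
    by [move/(_ erefl) | apply/eqP | apply/eqP; rewrite eq_sym].
- by rewrite eq_sym.
- exact: inimg_contract_mor.
- exact: tau_a.
case: ifP => m.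
  split => // v w; split; last first.
    by case=> [->|[-> ->]|[-> ->]] //; [exact: contract_vert_pair | exact: esym contract_vert_pair].
  move/(congr1 val) => /=; rewrite m /=.
  case: (eqVneq v (gbd Y b)) => [->|vb]; case: (eqVneq w (gbd Y b)) => [->|wb] /=.
  - by move=> _; apply: Or31.
  - by move=> <-; apply: Or33.
  - by move=> ->; apply: Or32.
  - by move=> ->; apply: Or31.
split; first by move/negbT: m; rewrite negbK => /eqP.
by move=> v w /(congr1 val) /=; rewrite m.
Qed.

Lemma contract_factor : geq (gcomp contract_mor factor_mor) psi.
Proof.
split => [v|//|c nc]; first exact: unit_eq.
case: (boolP (inimg contract_mor c)) => [/inimgP [x xc]|nc'].
  subst c; rewrite gcomp_mI_in; last exact: val_inj.
  apply: val_mI_factor_mor; rewrite inimg_factor_mor.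
  by apply: contra nc => /inimgP [s e]; apply/inimgP; exists s.
rewrite gcomp_mI_out //=; move: nc'; rewrite inimg_contract_mor negb_and !negbK.
by case/orP => /eqP ->; rewrite /tau eqxx // (negbTE ba) bb.
Qed.

Lemma factor_mor_inj : injective (mF factor_mor).
Proof. by move=> s t /(congr1 val) /injpsi. Qed.

Lemma factor_mor_pairs : pairs_complement factor_mor.
Proof.
move=> x nx; have vx := val_mI_factor_mor nx.
have [n1 n2 n3] := pairs_psi (etrans (esym (congr1 negb (inimg_factor_mor x))) nx).
have ny : ~~ inimg factor_mor (mI factor_mor x) by rewrite inimg_factor_mor vx.
split => //; first by move/(congr1 val); rewrite vx.
by apply: val_inj; rewrite val_mI_factor_mor // vx.
Qed.

Lemma factor_mor_connected :
  (forall v w, connect (contr_adj psi) v w) ->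
  forall v w, connect (contr_adj factor_mor) v w.
Proof.
move=> conn v w; rewrite -(contract_vertK v) -(contract_vertK w).
apply: (connect_homo (e := contr_adj psi)) => // x y.
case/existsP => c /and3P [nc /eqP <- /eqP <-].
case: (boolP ((c != a) && (c != b))) => h.
  have nx : ~~ inimg factor_mor (Sub c h : contracted_flag) by rewrite inimg_factor_mor.
  apply: connect1; apply/existsP; exists (Sub c h : contracted_flag).
  by rewrite nx /= eqxx /= val_mI_factor_mor.
by move: h; rewrite negb_and !negbK => /orP [] /eqP ->; rewrite ?bb contract_vert_pair.
Qed.

Lemma card_contracted : #|gF contracted| < #|gF Y|.
Proof.
rewrite /= card_sig (cardD1 a (gF Y)) inE add1n ltnS.
by apply: subset_leq_card; apply/subsetP => x; rewrite !inE => /andP [->].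
Qed.

End ContractPair.

Lemma ctd_closure_bij S Y (psi : gmor Y (star S)) (v0 : gV Y) :
  is_agg Y -> injective (mF psi) -> (forall a, inimg psi a) ->
  (forall v w, connect (contr_adj psi) v w) -> gclosure ctd_gen psi.
Proof.
move=> aggY injpsi onto conn; apply: gcl_gen; split => //; left.
have all_eq (v w : gV Y) : v = w.
  case/connectP: (conn v w) => [[|z p]] /=; first by move=> _ ->.
  by case/andP => /existsP [c]; rewrite onto.
apply: giso_bij.
- by exists (fun _ => v0) => [v|[]]; [apply: all_eq | apply: unit_eq].
- exists (fun c => xchoose (existsP (onto c))) => [s|c]; last first.
    exact/eqP/(xchooseP (existsP (onto c))).
  by apply: injpsi; apply/eqP/(xchooseP (existsP (onto (mF psi s)))).
- by move=> c; apply: unit_eq.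
- by move=> c /=; rewrite aggY.
Qed.

Lemma ctd_closure_connected S Y (psi : gmor Y (star S)) (v0 : gV Y) :
  is_agg Y -> injective (mF psi) -> pairs_complement psi ->
  (forall v w, connect (contr_adj psi) v w) -> gclosure ctd_gen psi.
Proof.
move: {2}#|gF Y| (leqnn #|gF Y|) => n.
elim: n S Y psi v0 => [|n IHn] S Y psi v0 sizeY aggY injpsi pairs_psi conn.
  apply: ctd_closure_bij v0 _ _ _ conn => // a.
  by apply: contraT => na; move: sizeY; rewrite (cardD1 a).
case: (pickP [pred a | ~~ inimg psi a]) => [a /= na|onto]; last first.
  by apply: ctd_closure_bij v0 _ _ _ conn => // a; apply/negbFE/onto.
apply: gcl_ext (contract_factor pairs_psi na).
apply: gcl_step.
  split => //; right; exists a, (mI psi a), (pair_merges psi a).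
  exact: contract_mor_pair_contr.
apply: (IHn _ (contracted psi a) _ (contract_vert psi a v0)) => //.
- by rewrite -ltnS; apply: leq_trans (card_contracted psi a) sizeY.
- exact: factor_mor_inj.
- exact: factor_mor_pairs.
- exact: factor_mor_connected.
Qed.

(** * From comma objects to ribbon graphs *)

Lemma comma_phi_gmor S (c : comma_ob S) : is_gmor (cphi c).
Proof. by case: (ctd_closure_gmor (cphi_ctd c)). Qed.

Lemma comma_phi_connected S (c : comma_ob S) : fibre_connected (cphi c).
Proof. by case: (ctd_closure_gmor (cphi_ctd c)). Qed.

Lemma comma_phi_inj S (c : comma_ob S) : injective (mF (cphi c)).
Proof. by case: (comma_phi_gmor c). Qed.

Lemma comma_phi_pairs S (c : comma_ob S) : pairs_complement (cphi c).
Proof. by case: (comma_phi_gmor c) => _ _ _ _ h x /h []. Qed.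

Section RibbonOfComma.
Variables (S : finType) (c : comma_ob S).
Local Notation X := (cX c).
Local Notation phi := (cphi c).

Definition inner_flag := {a : gF X | ~~ inimg phi a}.

(* The flags of X are split into those coming from S through [phi] and the
   inner ones; the latter become the half-edges of the ribbon graph. *)
Definition join_flag (x : S + inner_flag) : gF X :=
  match x with inl s => mF phi s | inr n => val n end.

Definition split_flag (a : gF X) : S + inner_flag :=
  match Sumbool.sumbool_of_bool (inimg phi a) with
  | left h => inl (xchoose (existsP h))
  | right h => inr (Sub a (negbT h))
  end.

Lemma split_flag_in s : split_flag (mF phi s) = inl s.
Proof.
rewrite /split_flag; case: Sumbool.sumbool_of_bool => h; last by exfalso; move: h; rewrite inimg_mF.
by congr inl; apply: comma_phi_inj; apply/eqP/(xchooseP (existsP h)).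
Qed.

Lemma split_flag_out (n : inner_flag) : split_flag (val n) = inr n.
Proof.
rewrite /split_flag; case: Sumbool.sumbool_of_bool => h; last by congr inr; apply: val_inj.
by move: (valP n); rewrite h.
Qed.

Lemma join_flagK : cancel join_flag split_flag.
Proof. by case=> [s|n] /=; rewrite ?split_flag_in ?split_flag_out. Qed.

Lemma split_flagK : cancel split_flag join_flag.
Proof.
move=> a; case: (boolP (inimg phi a)) => [/inimgP [s <-]|h].
  by rewrite split_flag_in.
by rewrite (split_flag_out (Sub a h)).
Qed.

Lemma join_flag_inj : injective join_flag. Proof. exact: can_inj join_flagK. Qed.
Lemma split_flag_inj : injective split_flag. Proof. exact: can_inj split_flagK. Qed.

Definition edge_pairing (a : gF X) : gF X := if inimg phi a then a else mI phi a.

Lemma edge_pairingK : involutive edge_pairing.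
Proof.
move=> a; rewrite /edge_pairing; case: (boolP (inimg phi a)) => [->|na] //.
by have [n1 _ n3] := comma_phi_pairs na; rewrite (negbTE n1) n3.
Qed.

Definition ribbon_inv (x : S + inner_flag) : S + inner_flag :=
  split_flag (edge_pairing (join_flag x)).

Definition ribbon_of_comma : rdata S :=
  @RData S inner_flag (gV X) (fun x => gbd X (join_flag x)) ribbon_inv
    (fun x => split_flag (co c (join_flag x))).

Lemma ribbon_of_comma_cycord :
  @is_cycord (rgraph ribbon_of_comma) (rsig ribbon_of_comma).
Proof.
have [oinj obd oorb] := co_cyc c; split.
- by move=> x y /= /split_flag_inj /oinj /join_flag_inj.
- by move=> x /=; rewrite split_flagK obd.
move=> x y /= /oorb [n e]; exists n.
suff -> : forall m, iter m (fun z => split_flag (co c (join_flag z))) x =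
                    split_flag (iter m (co c) (join_flag x)) by rewrite e join_flagK.
by elim=> [|m IHm] /=; rewrite ?join_flagK // IHm split_flagK.
Qed.

Lemma ribbon_of_comma_connected : connected (rgraph ribbon_of_comma).
Proof.
split; first by have [v _] := (match comma_phi_gmor c with And5 h _ _ _ _ => h end) tt;
  apply/card_gt0P; exists v.
move=> v w; apply: connect_sub (comma_phi_connected (unit_eq _ _)) => x y.
case/existsP => a /and3P [na /eqP <- /eqP <-].
have [_ ne _] := comma_phi_pairs na.
apply: connect1; apply/existsP; exists (inr (Sub a na)).
rewrite /= /ribbon_inv /= /edge_pairing (negbTE na) split_flagK !eqxx !andbT.
by apply/eqP => /(congr1 join_flag); rewrite split_flagK.
Qed.

Lemma ribbon_of_comma_valid : ri_valid ribbon_of_comma.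
Proof.
split.
- by move=> x; rewrite /= /ribbon_inv split_flagK edge_pairingK join_flagK.
- exact: ribbon_of_comma_cycord.
- exact: ribbon_of_comma_connected.
move=> x; split=> [|[s ->]]; last first.
  by rewrite /= /ribbon_inv /edge_pairing /= inimg_mF split_flag_in.
case: x => [s _|n]; first by exists s.
rewrite /= /ribbon_inv /edge_pairing /= (negbTE (valP n)).
have [_ ne _] := comma_phi_pairs (valP n).
by move/(congr1 join_flag); rewrite split_flagK.
Qed.

End RibbonOfComma.

Arguments edge_pairing {S} c a.

(** * From ribbon graphs to comma objects *)

Definition agg_of (G : graph) : graph := @Graph (gF G) (gV G) (gbd G) id.

Definition agg_mor G H (f : gmor G H) : gmor (agg_of G) (agg_of H) :=
  @GMor (agg_of G) (agg_of H) (mV f) (mF f) (mI f).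

Section CommaOfRibbon.
Variables (S : finType) (r : ri_ob S).
Local Notation rr := (sval r).

Lemma ri_graph : is_graph (rgraph rr). Proof. by case: (svalP r). Qed.

Lemma ri_cycord : @is_cycord (rgraph rr) (rsig rr). Proof. by case: (svalP r). Qed.

Lemma rinv_inl s : rinv rr (inl s) = inl s.
Proof. by case: (svalP r) => _ _ _ h; apply/h; exists s. Qed.

Lemma rinv_inr e : rinv rr (inr e) <> inr e.
Proof. by case: (svalP r) => _ _ _ h /h [s]. Qed.

Lemma rinv_inr_inr e : exists e', rinv rr (inr e) = inr e'.
Proof.
case E: (rinv rr (inr e)) => [s|e']; last by exists e'.
by move: (ri_graph (inr e)); rewrite /= E rinv_inl.
Qed.

Definition contract_edges : gmor (agg_of (rgraph rr)) (star S) :=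
  @GMor (agg_of (rgraph rr)) (star S) (fun _ => tt) inl (rinv rr).

Lemma inimg_contract_edges x : inimg contract_edges x = if x is inl _ then true else false.
Proof. by case: x => [s|e]; apply/inimgP; [exists s | case]. Qed.

Lemma contract_edges_ctd : gclosure ctd_gen contract_edges.
Proof.
have [_ _ [/card_gt0P [v0 _] conn] _] := svalP r.
apply: (@ctd_closure_connected _ (agg_of (rgraph rr)) _ v0) => //.
- by move=> x y [].
- move=> x; rewrite inimg_contract_edges; case: x => [//|e] _.
  have [e' E] := rinv_inr_inr e.
  rewrite /= E inimg_contract_edges; split => //; rewrite -E.
    exact: rinv_inr.
  exact: ri_graph.
move=> v w; apply: connect_sub (conn v w) => x y /existsP [a /and3P [na ex ey]].
apply: connect1; apply/existsP; exists a; rewrite ex ey !andbT.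
by case: a na {ex ey} => [s|e]; rewrite /= ?rinv_inl ?eqxx // inimg_contract_edges.
Qed.

Definition comma_of_ribbon : comma_ob S :=
  @CommaOb S (agg_of (rgraph rr)) (rsig rr) contract_edges (fun _ => erefl)
    ri_cycord contract_edges_ctd.

End CommaOfRibbon.

(** * Forest morphisms become ribbon morphisms *)

Lemma is_gmor_oclosure Gen :
  (forall G H (f : gmor G H) o o', Gen G H f o o' -> is_gmor f) ->
  forall G H (f : gmor G H) o o', oclosure Gen f o o' -> is_gmor f.
Proof.
move=> gen_gmor G H f o o'; elim=> {G H f o o'}.
- by move=> G H f o o' /gen_gmor.
- by move=> G1 G2 G3 f g o1 o2 o3 /gen_gmor gf _ gg; apply: is_gmor_gcomp.
- by move=> G H f f' o o' _ gf ff'; apply: is_gmor_geq gf.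
Qed.

Lemma forest_gen_gmor G H (f : gmor G H) o o' : forest_gen f o o' -> is_gmor f.
Proof. by case=> _ _ _ _ [[[]]|[s [t [[]]]]]. Qed.

Lemma ribbon_gen_gmor G H (f : gmor G H) o o' : ribbon_gen f o o' -> is_gmor f.
Proof. by case=> _ _ _ _ [[[]]|[s [t [_ []]]]]. Qed.

Lemma forest_closure_gmor G H (f : gmor G H) o o' :
  oclosure forest_gen f o o' -> is_gmor f.
Proof. exact: (is_gmor_oclosure forest_gen_gmor). Qed.

Lemma ribbon_closure_gmor G H (f : gmor G H) o o' :
  oclosure ribbon_gen f o o' -> is_gmor f.
Proof. exact: (is_gmor_oclosure ribbon_gen_gmor). Qed.

Definition with_inv (Y : graph) (p : gF Y -> gF Y) : graph :=
  @Graph (gF Y) (gV Y) (gbd Y) p.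

Definition rib Y Y' (p : gF Y -> gF Y) (p' : gF Y' -> gF Y') (f : gmor Y Y') :
  gmor (with_inv p) (with_inv p') :=
  @GMor (with_inv p) (with_inv p') (mV f) (mF f) (mI f).

(* The involution a morphism [f] forces on its source from an involution [p']
   of its target: [p'] on the image of [mF f], the pairing [mI f] elsewhere. *)
Definition pull_inv Y Y' (f : gmor Y Y') (p' : gF Y' -> gF Y') (a : gF Y) : gF Y :=
  if [pick b | mF f b == a] is Some b then mF f (p' b) else mI f a.

Lemma pull_inv_in Y Y' (f : gmor Y Y') p' b :
  injective (mF f) -> pull_inv f p' (mF f b) = mF f (p' b).
Proof.
move=> injf; rewrite /pull_inv; case: pickP => [b' /eqP /injf -> //|nb].
by move: (nb b); rewrite eqxx.
Qed.

Lemma pull_inv_out Y Y' (f : gmor Y Y') p' a :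
  ~~ inimg f a -> pull_inv f p' a = mI f a.
Proof.
move=> na; rewrite /pull_inv; case: pickP => [b /eqP eb|//].
by move: na; rewrite -eb inimg_mF.
Qed.

Lemma pull_invK Y Y' (f : gmor Y Y') p' :
  is_gmor f -> involutive p' -> involutive (pull_inv f p').
Proof.
case=> _ injf _ _ nif p'K a; case: (boolP (inimg f a)) => [/inimgP [b <-]|na].
  by rewrite !pull_inv_in // p'K.
by have [n1 _ n3 _ _] := nif a na; rewrite !pull_inv_out.
Qed.

Lemma pull_inv_gcomp Y1 Y2 Y3 (f : gmor Y1 Y2) (h : gmor Y2 Y3) p' :
  injective (mF f) -> injective (mF h) ->
  pull_inv (gcomp f h) p' =1 pull_inv f (pull_inv h p').
Proof.
move=> injf injh; have injfh : injective (mF (gcomp f h)) by move=> x y /injf /injh.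
move=> a; case: (boolP (inimg f a)) => [/inimgP [b <-]|na]; last first.
  rewrite (pull_inv_out (f := f)) // pull_inv_out ?gcomp_mI_out //.
  by apply: contra na => /inimgP [c <-]; apply: inimg_mF.
rewrite pull_inv_in //; case: (boolP (inimg h b)) => [/inimgP [c <-]|nb].
  by rewrite pull_inv_in // (pull_inv_in (f := gcomp f h)).
rewrite (pull_inv_out (f := h)) // pull_inv_out ?gcomp_mI_in //.
by apply: contra nb => /inimgP [c /= /injf <-]; apply: inimg_mF.
Qed.

Lemma pull_inv_geq Y Y' (g g' : gmor Y Y') p' :
  injective (mF g) -> geq g g' -> pull_inv g p' =1 pull_inv g' p'.
Proof.
move=> injg gg'; case: (gg') => _ eF eI.
have injg' : injective (mF g') by move=> x y; rewrite -!eF => /injg.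
move=> a; case: (boolP (inimg g a)) => [/inimgP [b <-]|na].
  by rewrite pull_inv_in // (eF b) pull_inv_in // eF.
by rewrite !pull_inv_out -?(inimg_geq a gg') // eI.
Qed.

Lemma is_gmor_rib Y Y' (f : gmor Y Y') p p' :
  is_gmor f -> p =1 pull_inv f p' -> is_gmor (rib p p' f).
Proof.
move=> gf pE; case: (gf) => sf injf incf _ nif; split => //.
  by move=> b /=; rewrite pE pull_inv_in.
move=> a na; have [n1 n2 n3 _ n5] := nif a na; split => //.
by move=> _ /=; rewrite pE pull_inv_out.
Qed.

Lemma forest_gen_ribbon Y Y' (f : gmor Y Y') o o' p p' :
  forest_gen f o o' -> involutive p' -> p =1 pull_inv f p' ->
  ribbon_gen (rib p p' f) o o'.
Proof.
move=> fg p'K pE; have gf := forest_gen_gmor fg; have rg := is_gmor_rib gf pE.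
case: fg => _ _ co co' h; split => //.
  by move=> x /=; rewrite !pE; apply: pull_invK.
case: h => [[[_ bV bF] tr]|[s [t [[_ st ii ms hm] tr]]]]; first by left.
right; exists s, t; split => //.
by rewrite /= pE pull_inv_out ?ii ?eqxx.
Qed.

(* Each forest generator is lifted with the involution pulled back from the
   next step, so the composite lands on the prescribed involution [p]. *)
Lemma forest_closure_ribbon Y Y' (g : gmor Y Y') o o' :
  oclosure forest_gen g o o' ->
  forall (p : gF Y -> gF Y) (p' : gF Y' -> gF Y') R (j : gmor (with_inv p') R) oR,
  involutive p' -> p =1 pull_inv g p' -> ribbon_gen j o' oR ->
  oclosure ribbon_gen (gcomp (rib p p' g) j) o oR.
Proof.
elim=> {Y Y' g o o'}.
- move=> Y Y' f o o' fg p p' R j oR p'K pE jg.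
  by apply: ocl_step (ocl_gen jg); apply: forest_gen_ribbon.
- move=> Y1 Y2 Y3 f h o1 o2 o3 fg hcl IH p p' R j oR p'K pE jg.
  have [_ injf _ _ _] := forest_gen_gmor fg.
  have gh := forest_closure_gmor hcl; have [_ injh _ _ _] := gh.
  have pE2 : p =1 pull_inv f (pull_inv h p').
    by move=> a; rewrite pE pull_inv_gcomp.
  apply: ocl_ext (ocl_step (forest_gen_ribbon fg (pull_invK gh p'K) pE2)
                            (IH _ p' R j oR p'K (frefl _) jg)) _.
  exact: (@gcompA _ _ _ _ (rib p (pull_inv h p') f)).
- move=> Y Y' g g' o o' gcl IH gg' p p' R j oR p'K pE jg.
  have [_ injg _ _ _] := forest_closure_gmor gcl.
  apply: ocl_ext (IH p p' R j oR p'K _ jg) _; last exact: geq_gcompl.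
  by move=> a; rewrite pE (pull_inv_geq p' injg gg').
Qed.

(** * The two functors *)

Section RibbonMor.
Variable S : finType.
Implicit Types c : comma_ob S.

Definition ribbon_ob c : ri_ob S := exist _ _ (ribbon_of_comma_valid c).

Definition ribbon_mor c c' (psi : gmor (cX c) (cX c')) :
  gmor (rgraph (ribbon_of_comma c)) (rgraph (ribbon_of_comma c')) :=
  @GMor (rgraph (ribbon_of_comma c)) (rgraph (ribbon_of_comma c')) (mV psi)
    (fun y => split_flag (mF psi (join_flag y)))
    (fun x => split_flag (mI psi (join_flag x))).

Lemma ribbon_mor_inj c c' (psi : gmor (cX c) (cX c')) :
  injective (mF psi) -> injective (mF (ribbon_mor psi)).
Proof. by move=> injpsi x y /= /split_flag_inj /injpsi /join_flag_inj. Qed.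

Lemma inimg_ribbon_mor c c' (psi : gmor (cX c) (cX c')) x :
  inimg psi (join_flag x) -> inimg (ribbon_mor psi) x.
Proof.
case/inimgP => y ey; apply/inimgP; exists (@split_flag S c' y).
by rewrite /= split_flagK ey join_flagK.
Qed.

Lemma ribbon_inv_join c x :
  join_flag (ribbon_inv x) = edge_pairing c (join_flag x).
Proof. exact: split_flagK. Qed.

Definition join_mor c : gmor (with_inv (edge_pairing c)) (rgraph (ribbon_of_comma c)) :=
  @GMor (with_inv (edge_pairing c)) (rgraph (ribbon_of_comma c)) id (@join_flag S c) id.

Definition split_mor c : gmor (rgraph (ribbon_of_comma c)) (with_inv (edge_pairing c)) :=
  @GMor (rgraph (ribbon_of_comma c)) (with_inv (edge_pairing c)) id (@split_flag S c) id.

Lemma join_mor_gen c : ribbon_gen (join_mor c) (co c) (rsig (ribbon_of_comma c)).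
Proof.
have [rgr rcyc _ _] := ribbon_of_comma_valid c.
split => //; first exact: edge_pairingK.
  exact: co_cyc.
left; split; last by move=> y /=; rewrite split_flagK.
apply: giso_bij => //; first by exists id.
  by exists (@split_flag S c); [apply: join_flagK | apply: split_flagK].
by move=> y /=; rewrite ribbon_inv_join.
Qed.

Lemma split_mor_gen c : ribbon_gen (split_mor c) (rsig (ribbon_of_comma c)) (co c).
Proof.
have [rgr rcyc _ _] := ribbon_of_comma_valid c.
split => //; first exact: edge_pairingK.
  exact: co_cyc.
left; split; last by move=> y /=; rewrite split_flagK.
apply: giso_bij => //; first by exists id.
- by exists (@join_flag S c); [apply: split_flagK | apply: join_flagK].
- by move=> y /=; rewrite split_flagK.
by move=> y; apply: join_flag_inj; rewrite ribbon_inv_join !split_flagK.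
Qed.

Lemma edge_pairing_pull c c' (psi : gmor (cX c) (cX c')) :
  is_gmor psi -> geq (gcomp psi (cphi c')) (cphi c) ->
  edge_pairing c =1 pull_inv psi (edge_pairing c').
Proof.
case=> _ injpsi _ _ _ over; case: (over) => _ eF eI x.
have mF_phi s : mF psi (mF (cphi c') s) = mF (cphi c) s := eF s.
case: (boolP (inimg psi x)) => [/inimgP [y <-]|nx]; last first.
  have nc : ~~ inimg (gcomp psi (cphi c')) x.
    by apply: contra nx => /inimgP [s <-]; apply: inimg_mF.
  rewrite pull_inv_out // /edge_pairing -(inimg_geq _ over) (negbTE nc) -eI //.
  exact: gcomp_mI_out.
rewrite pull_inv_in //; case: (boolP (inimg (cphi c') y)) => [/inimgP [s <-]|ny].
  by rewrite /edge_pairing mF_phi !inimg_mF.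
have nc : ~~ inimg (gcomp psi (cphi c')) (mF psi y).
  rewrite inimg_gcomp // negb_and inimg_mF /=; apply/existsP.
  by case=> z /andP [/eqP /injpsi ->]; apply/negP.
rewrite /edge_pairing -(inimg_geq _ over) (negbTE nc) (negbTE ny) -eI //.
exact: gcomp_mI_in.
Qed.

(* [ribbon_mor psi] is [psi] conjugated by the flag relabellings, and the
   relabelled [psi] is a composite of ribbon generators by
   [forest_closure_ribbon]. *)
Lemma ribbon_mor_closure c c' (psi : gmor (cX c) (cX c')) :
  oclosure forest_gen psi (co c) (co c') -> geq (gcomp psi (cphi c')) (cphi c) ->
  oclosure ribbon_gen (ribbon_mor psi) (rsig (ribbon_of_comma c))
    (rsig (ribbon_of_comma c')).
Proof.
move=> cl over; have gpsi := forest_closure_gmor cl; have [_ injpsi _ _ _] := gpsi.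
have cl' := forest_closure_ribbon cl (@edge_pairingK S c')
  (edge_pairing_pull gpsi over) (join_mor_gen c').
apply: ocl_ext (ocl_step (split_mor_gen c) cl') _.
split => // x nx.
rewrite -{1}[x]join_flagK gcomp_mI_in; last exact: split_flag_inj.
rewrite gcomp_mI_out //.
by apply: contra nx => /inimgP [y ey]; apply: inimg_ribbon_mor; rewrite -ey inimg_mF.
Qed.

End RibbonMor.

Lemma is_gmor_agg_mor G H (f : gmor G H) : is_gmor f -> is_gmor (agg_mor f).
Proof. by case=> sf injf incf _ nif; split => // a /nif []. Qed.

Lemma ribbon_gen_forest G H (f : gmor G H) o o' :
  ribbon_gen f o o' -> forest_gen (agg_mor f) o o'.
Proof.
case=> _ _ co co' h; split => //.
case: h => [[[gf bV bF] tr]|[s [t [_ [gf st ii ms hm] tr]]]].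
  by left; split => //; split => //; apply: is_gmor_agg_mor.
by right; exists s, t; split => //; split => //; apply: is_gmor_agg_mor.
Qed.

Lemma ribbon_closure_forest G H (g : gmor G H) o o' :
  oclosure ribbon_gen g o o' -> oclosure forest_gen (agg_mor g) o o'.
Proof.
elim=> {G H g o o'}.
- by move=> G H f o o' /ribbon_gen_forest; apply: ocl_gen.
- by move=> G1 G2 G3 f g o1 o2 o3 /ribbon_gen_forest fg _; apply: ocl_step fg.
- by move=> G H f f' o o' _ cl [eV eF eI]; apply: ocl_ext cl _.
Qed.

Lemma agg_mor_over S (r r' : ri_ob S) (psi : gmor (rgraph (sval r)) (rgraph (sval r'))) :
  is_gmor psi -> (forall s, mF psi (inl s) = inl s) ->
  geq (gcomp (agg_mor psi) (contract_edges r')) (contract_edges r).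
Proof.
case=> _ injpsi _ ed nipsi fixS; split => // x nx.
case: (boolP (inimg psi x)) => [/inimgP [y <-]|npsi].
  by rewrite (gcomp_mI_in (f := agg_mor psi)) //=; apply: ed.
rewrite (gcomp_mI_out (f := agg_mor psi)) //=.
have [_ _ _ mIE _] := nipsi x npsi; apply: mIE.
case: x nx npsi => [s|e] _ npsi; last exact: rinv_inr.
by move: npsi; rewrite -fixS inimg_mF.
Qed.

Section Equivalence.
Variable S : finType.

Definition ribbon_functor : functor (comma_cat S) (RI_cat S) :=
  @Functor (comma_cat S) (RI_cat S) (@ribbon_ob S) (@ribbon_mor S).

Definition comma_functor : functor (RI_cat S) (comma_cat S) :=
  @Functor (RI_cat S) (comma_cat S) (@comma_of_ribbon S) (fun r r' psi => agg_mor psi).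

Lemma ribbon_functorP : is_functor ribbon_functor.
Proof.
split.
- move=> c c' psi [cl over]; split; first exact: ribbon_mor_closure.
  move=> s /=; case: over => _ eF _.
  by rewrite (eF s : mF psi (mF (cphi c') s) = mF (cphi c) s) split_flag_in.
- move=> c c' f g _ _ [eV eF eI]; split => //= [y|x nx]; first by rewrite eF.
  by rewrite eI //; apply: contra nx => /inimg_ribbon_mor.
- by move=> c; split => //= x; rewrite join_flagK.
move=> c1 c2 c3 f g [clf _] [clg _].
have [_ injf _ _ _] := forest_closure_gmor clf.
split => [//|y|x nx]; first by rewrite /= split_flagK.
change (split_flag (mI (gcomp f g) (join_flag x)) =
        mI (gcomp (ribbon_mor f) (ribbon_mor g)) x).
case: (boolP (inimg f (join_flag x))) => [/inimgP [y ey]|nfx].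
  have ex : x = mF (ribbon_mor f) (split_flag y) by rewrite /= split_flagK ey join_flagK.
  rewrite [in RHS]ex gcomp_mI_in; last exact: ribbon_mor_inj.
  by rewrite -ey gcomp_mI_in //= !split_flagK.
rewrite !gcomp_mI_out //.
by apply: contra nfx => /inimgP [y <-]; rewrite /= split_flagK inimg_mF.
Qed.

Lemma comma_functorP : is_functor comma_functor.
Proof.
split => // r r' psi [cl fixS]; split; first exact: ribbon_closure_forest.
by apply: agg_mor_over => //; apply: ribbon_closure_gmor cl.
Qed.

End Equivalence.

(** * The unit and counit *)

Section Unit.
Variables (S : finType) (c : comma_ob S).
Local Notation c' := (comma_of_ribbon (ribbon_ob c)).

Definition unit_mor : gmor (cX c) (cX c') :=
  @GMor (cX c) (cX c') id (@join_flag S c) id.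

Definition unit_inv : gmor (cX c') (cX c) :=
  @GMor (cX c') (cX c) id (@split_flag S c) id.

Lemma unit_mor_hom : ishom (unit_mor : arr (comma_cat S) c c').
Proof.
have [_ rcyc _ _] := ribbon_of_comma_valid c; split.
  apply: ocl_gen; split => //; [exact: cX_agg | exact: co_cyc |].
  left; split; last by move=> y /=; rewrite split_flagK.
  apply: giso_bij => //; first by exists id.
    by exists (@split_flag S c); [apply: join_flagK | apply: split_flagK].
  by move=> b /=; rewrite cX_agg.
split => [v|//|x nx]; first exact: unit_eq.
rewrite -[in LHS](split_flagK x) gcomp_mI_in; last exact: join_flag_inj.
by rewrite /= !split_flagK /edge_pairing ifN.
Qed.

Lemma unit_inv_hom : ishom (unit_inv : arr (comma_cat S) c' c).
Proof.
have [_ rcyc _ _] := ribbon_of_comma_valid c; split.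
  apply: ocl_gen; split => //; [exact: cX_agg | exact: co_cyc |].
  left; split; last by move=> y /=; rewrite split_flagK.
  apply: giso_bij => //; first by exists id.
  - by exists (@join_flag S c); [apply: split_flagK | apply: join_flagK].
  - by move=> b /=; rewrite split_flagK.
  by move=> b /=; rewrite cX_agg.
split => [v|s|x nx]; [exact: unit_eq | exact: split_flag_in |].
rewrite -[in LHS](join_flagK x) gcomp_mI_in; last exact: split_flag_inj.
case: x nx => [s|n] nx.
  by case/negP: nx; apply/inimgP; exists s; rewrite /= split_flag_in.
by rewrite /= /ribbon_inv /edge_pairing /= (negbTE (valP n)).
Qed.

End Unit.

Section Counit.
Variables (S : finType) (r : ri_ob S).
Local Notation r' := (ribbon_ob (comma_of_ribbon r)).

Lemma edge_pairing_rinv : edge_pairing (comma_of_ribbon r) =1 rinv (sval r).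
Proof.
by case=> [s|e]; rewrite /edge_pairing inimg_contract_edges ?rinv_inl.
Qed.

Definition counit_mor : gmor (rgraph (sval r')) (rgraph (sval r)) :=
  @GMor (rgraph (sval r')) (rgraph (sval r)) id (@split_flag S (comma_of_ribbon r)) id.

Definition counit_inv : gmor (rgraph (sval r)) (rgraph (sval r')) :=
  @GMor (rgraph (sval r)) (rgraph (sval r')) id (@join_flag S (comma_of_ribbon r)) id.

Lemma counit_mor_hom : ishom (counit_mor : arr (RI_cat S) r' r).
Proof.
have [rgr rcyc _ _] := ribbon_of_comma_valid (comma_of_ribbon r).
split; last exact: split_flag_in.
apply: ocl_gen; split => //; [exact: ri_graph | exact: ri_cycord |].
left; split; last by move=> y /=; rewrite split_flagK.
apply: giso_bij => //; first by exists id.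
- by exists (@join_flag S (comma_of_ribbon r)); [apply: split_flagK | apply: join_flagK].
- by move=> b /=; rewrite split_flagK.
by move=> b /=; rewrite /ribbon_inv split_flagK edge_pairing_rinv.
Qed.

Lemma counit_inv_hom : ishom (counit_inv : arr (RI_cat S) r r').
Proof.
have [rgr rcyc _ _] := ribbon_of_comma_valid (comma_of_ribbon r).
split => //; apply: ocl_gen; split => //; [exact: ri_graph | exact: ri_cycord |].
left; split; last by move=> y /=; rewrite split_flagK.
apply: giso_bij => //; first by exists id.
  by exists (@split_flag S (comma_of_ribbon r)); [apply: join_flagK | apply: split_flagK].
by move=> b /=; rewrite ribbon_inv_join edge_pairing_rinv.
Qed.

End Counit.

Lemma unit_natural S (c1 c2 : comma_ob S) (f : gmor (cX c1) (cX c2)) :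
  is_gmor f ->
  geq (gcomp f (unit_mor c2)) (gcomp (unit_mor c1) (agg_mor (ribbon_mor f))).
Proof.
case=> _ injf _ _ _; split => [//|y|x nx]; first by rewrite /= split_flagK.
have nfx : ~~ inimg f x.
  by apply: contra nx => /inimgP [y <-]; apply/inimgP; exists (split_flag y) => /=;
    rewrite split_flagK.
rewrite gcomp_mI_out // -[in RHS](split_flagK x) gcomp_mI_in; last exact: join_flag_inj.
by rewrite /= !split_flagK.
Qed.

Lemma counit_natural S (r1 r2 : ri_ob S) (f : gmor (rgraph (sval r1)) (rgraph (sval r2))) :
  geq (gcomp (@ribbon_mor S (comma_of_ribbon r1) (comma_of_ribbon r2) (agg_mor f))
             (counit_mor r2))
      (gcomp (counit_mor r1) f).
Proof.
split => [//|y|x nx]; first by rewrite /= split_flagK.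
have nfx : ~~ inimg (@ribbon_mor S (comma_of_ribbon r1) (comma_of_ribbon r2) (agg_mor f)) x.
  by apply: contra nx => /inimgP [y <-]; apply/inimgP; exists (join_flag y) => /=;
    rewrite join_flagK.
rewrite gcomp_mI_out // -[in RHS](join_flagK x) gcomp_mI_in //.
exact: split_flag_inj.
Qed.

Lemma unit_natiso S : natiso (fid (comma_cat S)) (fcomp (ribbon_functor S) (comma_functor S)).
Proof.
exists (@unit_mor S), (@unit_inv S); split.
- by move=> c; split; [apply: unit_mor_hom | apply: unit_inv_hom].
- by move=> c; split; apply: geq_gid => // b /=; rewrite ?join_flagK ?split_flagK.
by move=> c1 c2 f [cl _]; apply: unit_natural; apply: forest_closure_gmor cl.
Qed.

Lemma counit_natiso S : natiso (fcomp (comma_functor S) (ribbon_functor S)) (fid (RI_cat S)).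
Proof.
exists (@counit_mor S), (@counit_inv S); split.
- by move=> r; split; [apply: counit_mor_hom | apply: counit_inv_hom].
- by move=> r; split; apply: geq_gid => // b /=; rewrite ?join_flagK ?split_flagK.
by move=> r1 r2 f _; apply: counit_natural.
Qed.

Theorem proposition5p8 (S : finType) : cat_equiv (comma_cat S) (RI_cat S).
Proof.
exists (ribbon_functor S), (comma_functor S); split.
- exact: ribbon_functorP.
- exact: comma_functorP.
- exact: unit_natiso.
- exact: counit_natiso.
Qed.
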